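(* Let $M_{i}=\begin{pmatrix}a_{i} & b_{i}\\ c_{i} & d_{i}\end{pmatrix}$, $i\ge1$, be any sequence of $2\times2$ complex matrices, and let $(G_i,F_i)$, $i\ge1$, be a sequence of nonzero row vectors. Then $(G_{i},F_{i})$ is a left eigenvector of $(M_i)$ (with some eigenvalues $\lambda_i$) if and only if $\begin{pmatrix}F_{i}\\ -G_{i}\end{pmatrix}$ is a right eigenvector of $(M_i)$ (with some eigenvalues $\alpha_i$). Moreover, if $(G_i,F_i)$ is a left eigenvector with eigenvalues $\lambda_i$, $\begin{pmatrix}F_{i}\\ -G_{i}\end{pmatrix}$ is the corresponding right eigenvector with eigenvalues $\alpha_i$, and $F_{i}\neq0$ for all $i$, then setting $U_{i}=\begin{pmatrix}F_{i}^{-1} & 0\\ G_{i} & F_{i}\end{pmatrix}$ we have \[ U_{i}M_{i}U_{i+1}^{-1}=\begin{pmatrix}\alpha_{i} & \frac{b_{i}}{F_{i}F_{i+1}}\\ 0 & \lambda_{i}\end{pmatrix}, \] and in particular $\alpha_{i}\lambda_{i}=\det(M_{i})$.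
   Context: For a sequence of $2\times2$ matrices $M_i$: a sequence $v(i)$ of nonzero row vectors is a left eigenvector with eigenvalues $\lambda(i)\in\mathbb{C}$ if $v(i)M_{i}=\lambda(i)v(i+1)$ for all $i$; a sequence $u(i)$ of nonzero column vectors is a right eigenvector with eigenvalues $\alpha(i)\in\mathbb{C}$ if $M_{i}u(i+1)=\alpha(i)u(i)$ for all $i$. *)

From HB Require Import structures.
From mathcomp Require Import all_boot all_order all_algebra.
From mathcomp Require Import complex.
From mathcomp Require Import reals.
Set Implicit Arguments. Unset Strict Implicit. Unset Printing Implicit Defensive.
Import Order.TTheory GRing.Theory Num.Theory.
Local Open Scope ring_scope.

Definition row2 {K : nzRingType} (a b : K) : 'rV[K]_2 :=
  \row_(j < 2) if j == 0 :> nat then a else b.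

Definition col2 {K : nzRingType} (a b : K) : 'cV[K]_2 :=
  \col_(i < 2) if i == 0 :> nat then a else b.

Definition mx2 {K : nzRingType} (a b c d : K) : 'M[K]_2 :=
  \matrix_(i < 2, j < 2)
     if i == 0 :> nat then (if j == 0 :> nat then a else b)
     else (if j == 0 :> nat then c else d).

(* Sequences are indexed by nat, only indices i >= 1 matter. *)
Definition left_eigvec {K : nzRingType} (M : nat -> 'M[K]_2)
    (v : nat -> 'rV[K]_2) (lam : nat -> K) : Prop :=
  forall i : nat, (0 < i)%N -> v i != 0 /\ v i *m M i = lam i *: v i.+1.

Definition right_eigvec {K : nzRingType} (M : nat -> 'M[K]_2)
    (u : nat -> 'cV[K]_2) (alpha : nat -> K) : Prop :=
  forall i : nat, (0 < i)%N -> u i != 0 /\ M i *m u i.+1 = alpha i *: u i.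

From HB Require Import structures.
From mathcomp Require Import all_boot all_order all_algebra.
From mathcomp Require Import complex.
From mathcomp Require Import reals ring.
Import Order.TTheory GRing.Theory Num.Theory.
Local Open Scope ring_scope.

(* The row vector v = (G, F) and the column vector u = (F; -G) satisfy v u = 0, and
   in dimension 2 a nonzero vector determines its annihilator up to a scalar.  Hence
   v_i M_i = lam_i v_(i+1) gives v_i (M_i u_(i+1)) = lam_i v_(i+1) u_(i+1) = 0, so
   M_i u_(i+1) is a multiple of u_i, and symmetrically.  The second row of U_i is v_i
   and the first column of U_(i+1)^-1 is u_(i+1), so U_i M_i U_(i+1)^-1 is upper
   triangular with diagonal (alpha_i, lam_i); since det U_i = 1, alpha_i lam_i = det M_i. *)

Section Mx2.
Context {K : fieldType}.
Implicit Types a b c d x y : K.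

Lemma mx2E (A : 'M[K]_2) : A = mx2 (A 0 0) (A 0 1) (A 1 0) (A 1 1).
Proof.
apply/matrixP => i j; rewrite !mxE.
by case: i j => [[|[|//]] ?] [[|[|//]] ?]; congr (A _ _); apply/val_inj.
Qed.

Lemma row2E (y : 'rV[K]_2) : y = row2 (y 0 0) (y 0 1).
Proof.
apply/matrixP => i j; rewrite !mxE ord1.
by case: j => [[|[|//]] ?]; congr (y _ _); apply/val_inj.
Qed.

Lemma col2E (x : 'cV[K]_2) : x = col2 (x 0 0) (x 1 0).
Proof.
apply/matrixP => i j; rewrite !mxE ord1.
by case: i => [[|[|//]] ?]; congr (x _ _); apply/val_inj.
Qed.

Lemma row2_inj a b c d : row2 a b = row2 c d -> a = c /\ b = d.
Proof. by move/(congr1 (fun m : 'rV[K]_2 => (m 0 0, m 0 1))); rewrite !mxE => -[]. Qed.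

Lemma col2_inj a b c d : col2 a b = col2 c d -> a = c /\ b = d.
Proof. by move/(congr1 (fun m : 'cV[K]_2 => (m 0 0, m 1 0))); rewrite !mxE => -[]. Qed.

Lemma row2_eq0 a b : (row2 a b == 0) = (a == 0) && (b == 0).
Proof.
apply/eqP/andP => [| [/eqP-> /eqP->]].
  by move/(congr1 (fun m : 'rV[K]_2 => (m 0 0, m 0 1))); rewrite !mxE => -[-> ->].
by apply/matrixP => i j; rewrite !mxE; case: ifP.
Qed.

Lemma col2_eq0 a b : (col2 a b == 0) = (a == 0) && (b == 0).
Proof.
apply/eqP/andP => [| [/eqP-> /eqP->]].
  by move/(congr1 (fun m : 'cV[K]_2 => (m 0 0, m 1 0))); rewrite !mxE => -[-> ->].
by apply/matrixP => i j; rewrite !mxE; case: ifP.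
Qed.

Lemma scale_row2 k a b : k *: row2 a b = row2 (k * a) (k * b).
Proof. by apply/matrixP => i j; rewrite !mxE; case: ifP. Qed.

Lemma scale_col2 k a b : k *: col2 a b = col2 (k * a) (k * b).
Proof. by apply/matrixP => i j; rewrite !mxE; case: ifP. Qed.

Lemma mul_row2_col2 a b c d : row2 a b *m col2 c d = (a * c + b * d)%:M.
Proof. by apply/matrixP => i j; rewrite !ord1 !mxE !big_ord_recl big_ord0 !mxE /= addr0. Qed.

Lemma mul_row2_mx2 x y a b c d :
  row2 x y *m mx2 a b c d = row2 (x * a + y * c) (x * b + y * d).
Proof.
by apply/matrixP => i j; rewrite !mxE !big_ord_recl big_ord0 !mxE /= addr0; case: ifP.
Qed.

Lemma mul_mx2_col2 x y a b c d :
  mx2 a b c d *m col2 x y = col2 (a * x + b * y) (c * x + d * y).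
Proof.
by apply/matrixP => i j; rewrite !mxE !big_ord_recl big_ord0 !mxE /= addr0; case: ifP.
Qed.

Lemma mul_mx2 a b c d a' b' c' d' :
  mx2 a b c d *m mx2 a' b' c' d' =
  mx2 (a * a' + b * c') (a * b' + b * d') (c * a' + d * c') (c * b' + d * d').
Proof.
by apply/matrixP => i j; rewrite !mxE !big_ord_recl big_ord0 !mxE /= addr0; do 2 case: ifP.
Qed.

Lemma det_mx2 a b c d : \det (mx2 a b c d) = a * d - b * c.
Proof.
rewrite (expand_det_row _ 0) !big_ord_recl big_ord0 /cofactor !det_mx11 !mxE /=.
by rewrite addr0 expr0 expr1 mul1r mulN1r mulrN.
Qed.

Lemma det_upper_mx2 a b d : \det (mx2 a b 0 d) = a * d.
Proof. by rewrite det_mx2 mulr0 subr0. Qed.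

Lemma proportional2 x0 x1 y0 y1 :
  (x0 != 0) || (x1 != 0) -> x0 * y1 = x1 * y0 -> exists k, y0 = k * x0 /\ y1 = k * x1.
Proof.
have [-> /= x1_nz | x0_nz _] := eqVneq x0 0.
  rewrite mul0r => /esym/eqP; rewrite mulf_eq0 (negbTE x1_nz) => /eqP->.
  by exists (y1 / x1); rewrite mulr0 mulfVK.
move=> e; exists (y0 / x0); split; first by rewrite mulfVK.
by rewrite mulrAC [y0 * _]mulrC -e mulrC mulKf.
Qed.

Lemma col2_perp_eq0 a b : (col2 b (- a) == 0) = (row2 a b == 0).
Proof. by rewrite row2_eq0 col2_eq0 oppr_eq0 andbC. Qed.

Lemma row2_mul_col2_perp a b : row2 a b *m col2 b (- a) = 0.
Proof. by rewrite mul_row2_col2 mulrN mulrC subrr raddf0. Qed.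

Lemma row2_mulmx_eq0 a b (x : 'cV[K]_2) :
  row2 a b != 0 -> row2 a b *m x = 0 -> exists k, x = k *: col2 b (- a).
Proof.
rewrite -col2_perp_eq0 col2_eq0 negb_and [x]col2E mul_row2_col2 => nz.
move/(congr1 (fun m : 'M_1 => m 0 0)); rewrite !mxE eqxx mulr1n => /eqP.
rewrite addr_eq0 => /eqP e.
have [|k [-> ->]] := @proportional2 b (- a) (x 0 0) (x 1 0) nz.
  by rewrite mulNr e opprK.
by exists k; rewrite scale_col2.
Qed.

Lemma mulmx_col2_perp_eq0 a b (y : 'rV[K]_2) :
  row2 a b != 0 -> y *m col2 b (- a) = 0 -> exists k, y = k *: row2 a b.
Proof.
rewrite row2_eq0 negb_and [y]row2E mul_row2_col2 => nz.
move/(congr1 (fun m : 'M_1 => m 0 0)); rewrite !mxE eqxx mulr1n => /eqP.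
rewrite mulrN subr_eq0 mulrC (mulrC (y 0 1)) => /eqP e.
have [|k [-> ->]] := @proportional2 a b (y 0 0) (y 0 1) nz.
  by rewrite e.
by exists k; rewrite scale_row2.
Qed.

Lemma left_to_right_eigvec {A : 'M[K]_2} {a b a' b' lam : K} :
  row2 a b != 0 -> row2 a b *m A = lam *: row2 a' b' ->
  exists alpha, A *m col2 b' (- a') = alpha *: col2 b (- a).
Proof.
move=> nz e; apply: row2_mulmx_eq0 nz _.
by rewrite mulmxA e -scalemxAl row2_mul_col2_perp scaler0.
Qed.

Lemma right_to_left_eigvec {A : 'M[K]_2} {a b a' b' alpha : K} :
  row2 a' b' != 0 -> A *m col2 b' (- a') = alpha *: col2 b (- a) ->
  exists lam, row2 a b *m A = lam *: row2 a' b'.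
Proof.
move=> nz e; apply: mulmx_col2_perp_eq0 nz _.
by rewrite -mulmxA e -scalemxAr row2_mul_col2_perp scaler0.
Qed.

Definition gauge_mx g f : 'M[K]_2 := mx2 f^-1 0 g f.

Lemma det_gauge_mx g f : f != 0 -> \det (gauge_mx g f) = 1.
Proof. by move=> nz; rewrite det_mx2 mul0r subr0 mulVf. Qed.

Lemma gauge_mx_unit g f : f != 0 -> gauge_mx g f \in unitmx.
Proof. by move=> nz; rewrite unitmxE det_gauge_mx ?unitr1. Qed.

Lemma gauge_mx_triangularize {A : 'M[K]_2} {g f g' f' lam alpha : K} :
  f != 0 -> f' != 0 ->
  row2 g f *m A = lam *: row2 g' f' -> A *m col2 f' (- g') = alpha *: col2 f (- g) ->
  gauge_mx g f *m A *m invmx (gauge_mx g' f') = mx2 alpha (A 0 1 / (f * f')) 0 lam.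
Proof.
move=> nz nz'; rewrite [A]mx2E; move: (A 0 0) (A 0 1) (A 1 0) (A 1 1) => a b c d.
rewrite mul_row2_mx2 mul_mx2_col2 scale_row2 scale_col2.
move=> /row2_inj[e1 e2] /col2_inj[r1 _].
rewrite -[RHS](mulmxK (gauge_mx_unit g' f' nz')); congr (_ *m _).
rewrite /gauge_mx !mul_mx2 !mxE /=; congr (mx2 _ _ _ _).
- have -> : alpha = (a * f' + b * - g') / f by rewrite r1 mulfK.
  by field; apply/andP.
- by field; apply/andP.
- by rewrite e1; ring.
- by rewrite e2; ring.
Qed.

End Mx2.

Lemma pos_nat_choice {T : choiceType} (x0 : T) (P : nat -> pred T) :
  (forall i, (0 < i)%N -> exists x, P i x) ->
  exists f : nat -> T, forall i, (0 < i)%N -> P i (f i).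
Proof.
move=> exP; have ex i : exists x, (0 < i)%N ==> P i x.
  by have [->|/exP[x Px]] := posnP i; [exists x0 | exists x; rewrite Px implybT].
by exists (fun i => xchoose (ex i)) => i i_gt0; apply: implyP (xchooseP (ex i)) i_gt0.
Qed.

Section EigenvectorSequences.
Variables (K : fieldType) (M : nat -> 'M[K]_2) (G F : nat -> K).
Hypothesis GF_neq0 : forall i, (0 < i)%N -> row2 (G i) (F i) != 0.

Lemma left_right_eigvecP :
  (exists lam, left_eigvec M (fun i => row2 (G i) (F i)) lam) <->
  (exists alpha, right_eigvec M (fun i => col2 (F i) (- G i)) alpha).
Proof.
split=> [[lam hl] | [alpha hr]].
- case: (pos_nat_choice (0 : K)
    (fun i a => M i *m col2 (F i.+1) (- G i.+1) == a *: col2 (F i) (- G i)))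
    => [i /hl[nz /(left_to_right_eigvec nz)[a ea]] | alpha halpha].
    by exists a; apply/eqP.
  by exists alpha => i i_gt0; rewrite col2_perp_eq0 GF_neq0 //; split=> //; apply/eqP/halpha.
- case: (pos_nat_choice (0 : K)
    (fun i l => row2 (G i) (F i) *m M i == l *: row2 (G i.+1) (F i.+1)))
    => [i /hr[_ er] | lam hlam].
    by have [l el] := right_to_left_eigvec (GF_neq0 _ (ltn0Sn i)) er; exists l; apply/eqP.
  by exists lam => i i_gt0; rewrite GF_neq0 //; split=> //; apply/eqP/hlam.
Qed.

End EigenvectorSequences.

Theorem lemma26 (R : realType) (M : nat -> 'M[R[i]]_2) (G F : nat -> R[i])
  (hnz : forall i : nat, (0 < i)%N -> row2 (G i) (F i) != 0) :
  ((exists lam : nat -> R[i], left_eigvec M (fun i => row2 (G i) (F i)) lam) <->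
   (exists alpha : nat -> R[i], right_eigvec M (fun i => col2 (F i) (- G i)) alpha))
  /\
  (forall lam alpha : nat -> R[i],
     left_eigvec M (fun i => row2 (G i) (F i)) lam ->
     right_eigvec M (fun i => col2 (F i) (- G i)) alpha ->
     (forall i : nat, (0 < i)%N -> F i != 0) ->
     forall i : nat, (0 < i)%N ->
       let U := fun k : nat => mx2 (F k)^-1 0 (G k) (F k) in
       U i *m M i *m invmx (U i.+1)
         = mx2 (alpha i) (M i 0 1 / (F i * F i.+1)) 0 (lam i)
       /\ alpha i * lam i = \det (M i)).
Proof.
split; first exact: left_right_eigvecP.
move=> lam alpha hl hr hF i i_gt0 U.
have [_ el] := hl i i_gt0; have [_ er] := hr i i_gt0.
have nzFi := hF i i_gt0; have nzFi1 := hF i.+1 isT.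
have UMU := gauge_mx_triangularize nzFi nzFi1 el er.
split; first exact: UMU.
have := congr1 determinant UMU.
rewrite det_upper_mx2 !det_mulmx det_inv !det_gauge_mx // invr1 mulr1 mul1r.
by move=> <-.
Qed.
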